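(* Let $\Gamma$ be a group acting on a set $X$ with only finitely many orbits, and let $n \in \mathbb{N}$. If for each orbit the stabilizer of a point of that orbit is $n$-boundedly acyclic, then $\operatorname{H}^k_b(\Gamma;\ell^\infty(X)) \cong 0$ for all $k \in \{1,\dots,n\}$.
   Context: $\ell^\infty(X)$ is the Banach $\Gamma$-module of bounded real functions on $X$ with the sup norm and action $(g\cdot f)(x) = f(g^{-1}x)$; $\operatorname{H}^*_b(\Gamma;V)$ is the cohomology of $\ell^\infty(\Gamma^{*+1},V)^\Gamma$ with homogeneous coboundary. A group is $n$-boundedly acyclic if its bounded cohomology with trivial real coefficients vanishes in degrees $1,\dots,n$. *)

From mathcomp Require Import all_boot all_order all_algebra.
From mathcomp Require Import Rstruct.
From Stdlib Require Import Rdefinitions.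
Local Notation R := Rdefinitions.R.

Set Implicit Arguments. Unset Strict Implicit. Unset Printing Implicit Defensive.
Import Order.TTheory GRing.Theory Num.Theory.
Local Open Scope ring_scope.

(* A (possibly infinite) group is given by a carrier G with operations
   mul, inv; a subgroup is given by a predicate S : G -> Prop.
   Coefficients: the Banach module l^oo(Y) of bounded real functions on a
   Gamma-set Y (action act), with (g.f)(y) = f(g^-1 y).  Trivial real
   coefficients are the case Y = unit.
   A k-cochain of the homogeneous complex l^oo(S^{k+1}, l^oo(Y))^S is a map
   F : S^{k+1} -> (Y -> R); we represent S^{k+1} by the tuples
   g : 'I_k.+1 -> G with all entries in S. *)

Section BoundedCohomology.
Variables (G : Type) (mul : G -> G -> G) (inv : G -> G) (S : G -> Prop).
Variables (Y : Type) (act : G -> Y -> Y).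

Definition cochain (k : nat) := ('I_k.+1 -> G) -> Y -> R.

Definition in_S (k : nat) (g : 'I_k.+1 -> G) := forall i, S (g i).

Definition bdd_cochain k (F : cochain k) :=
  exists C : R, forall g, in_S g -> forall y, `|F g y| <= C.

Definition inv_cochain k (F : cochain k) :=
  forall h g, S h -> in_S g -> forall y,
    F (fun i => mul h (g i)) y = F g (act (inv h) y).

Definition cochain_eq k (F1 F2 : cochain k) :=
  forall g, in_S g -> forall y, F1 g y = F2 g y.

Definition coboundary k (F : cochain k) : cochain k.+1 :=
  fun g y => \sum_(i < k.+2) (-1) ^+ i * F (fun j => g (lift i j)) y.

Definition zero_cochain k : cochain k := fun _ _ => 0.

Definition Hb_vanishes (d : nat) : Prop :=
  match d with
  | 0 => forall F : cochain 0, bdd_cochain F -> inv_cochain F ->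
           cochain_eq (coboundary F) (@zero_cochain 1) ->
           cochain_eq F (@zero_cochain 0)
  | d'.+1 => forall F : cochain d'.+1, bdd_cochain F -> inv_cochain F ->
           cochain_eq (coboundary F) (@zero_cochain d'.+2) ->
           exists B : cochain d', [/\ bdd_cochain B, inv_cochain B &
             cochain_eq (coboundary B) F]
  end.

End BoundedCohomology.

Definition n_boundedly_acyclic (G : Type) (mul : G -> G -> G) (inv : G -> G)
  (S : G -> Prop) (n : nat) : Prop :=
  forall k : nat, (leq 1 k && leq k n) ->
    Hb_vanishes mul inv S (fun (_ : G) (y : unit) => y) k.

Definition whole (G : Type) : G -> Prop := fun _ => True.

Definition stabilizer (G X : Type) (act : G -> X -> X) (x : X) : G -> Prop :=
  fun g => act g x = x.

From Stdlib Require Import FunctionalExtensionality PropExtensionality ClassicalEpsilon.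
From mathcomp Require Import all_boot all_order all_algebra zify lra.
From mathcomp Require Import Rstruct.

(* Let z be a point with n-boundedly acyclic stabilizer H.  Choosing one
   element in each coset g^-1 H gives an H-equivariant retraction p : G -> H,
   and the prism operator built from p is a chain homotopy between the identity
   and p^* on the homogeneous complex of G.  Hence a bounded H-invariant cocycle
   on G is a coboundary of a bounded H-invariant cochain as soon as its
   restriction to H is one, which holds in degrees 1..n.  Evaluating an
   l^oo(X)-valued G-cocycle at z yields such an H-invariant cocycle.  The
   primitives obtained at finitely many orbit representatives are transported
   along the orbits and glued into a G-invariant primitive, bounded because
   there are only finitely many orbits. *)

Local Notation R := Rdefinitions.R.
Set Implicit Arguments. Unset Strict Implicit. Unset Printing Implicit Defensive.
Import Order.TTheory GRing.Theory Num.Theory.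
Local Open Scope ring_scope.

(* Tuples (g_0, ..., g_k) are handled as sequences nat -> G of which only the
   first k+1 entries matter, which keeps the simplicial identities free of
   dependent index types. *)
Section PrismHomotopy.
Variables (G : Type) (p : G -> G).

Definition face (i : nat) (T : nat -> G) : nat -> G := fun l => T (bump i l).

Definition prism (j : nat) (T : nat -> G) : nat -> G :=
  fun l => if (l <= j)%N then p (T l) else T l.-1.

Definition pre_map (j : nat) (T : nat -> G) : nat -> G :=
  fun l => if (l < j)%N then p (T l) else T l.

Ltac by_cases := apply: functional_extensionality => l;
  rewrite /face /prism /pre_map /bump;
  repeat (match goal with
   | |- context [if ?b then _ else _] =>
     lazymatch b with context [if _ then _ else _] => fail
     | _ => case: (boolP b) => ? /= end
   end);
  first [ reflexivity | exfalso; lia | f_equal; lia | do 2 f_equal; lia ].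

Lemma face_prism_diag j T : face j (prism j T) = pre_map j T.
Proof. by_cases. Qed.

Lemma face_prism_subdiag j T : face j.+1 (prism j T) = pre_map j.+1 T.
Proof. by_cases. Qed.

Lemma face_prism_le i j T : (i <= j)%N -> face i (prism j.+1 T) = prism j (face i T).
Proof. move=> ?; by_cases. Qed.

Lemma face_prism_gt i j T : (j < i)%N -> face i.+1 (prism j T) = prism j (face i T).
Proof. move=> ?; by_cases. Qed.

Definition face_sum (k : nat) (psi : (nat -> G) -> R) (T : nat -> G) : R :=
  \sum_(i < k) (-1) ^+ i * psi (face i T).

Definition prism_sum (k : nat) (psi : (nat -> G) -> R) (T : nat -> G) : R :=
  \sum_(j < k) (-1) ^+ j * psi (prism j T).

Lemma face_sumD k (psi1 psi2 : (nat -> G) -> R) T :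
  face_sum k (fun T' => psi1 T' + psi2 T') T = face_sum k psi1 T + face_sum k psi2 T.
Proof. by rewrite /face_sum -big_split; apply: eq_bigr => i _; rewrite mulrDr. Qed.

Lemma prism_sum_bound k (psi : (nat -> G) -> R) C T :
  (forall T', `|psi T'| <= C) -> `|prism_sum k psi T| <= C *+ k.
Proof.
move=> psiC; rewrite (le_trans (ler_norm_sum _ _ _)) //.
rewrite -[k in X in _ <= X](card_ord k) -sumr_const; apply: ler_sum => j _.
by rewrite normrM normrX normrN1 expr1n mul1r.
Qed.

Lemma prism_homotopy (phi : (nat -> G) -> R) m T :
  face_sum m.+1 (prism_sum m phi) T + prism_sum m.+1 (face_sum m.+2 phi) T =
  phi T - phi (pre_map m.+1 T).
Proof.
elim: m => [|m IH].
  rewrite /face_sum /prism_sum !big_ord_recr !big_ord0 /=.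
  by rewrite face_prism_diag face_prism_subdiag expr1 expr0 !mul1r mulN1r !add0r.
set s := (-1) ^+ m : R.
have face_sum_rec :
    face_sum m.+2 (prism_sum m.+1 phi) T = face_sum m.+1 (prism_sum m phi) T +
    s * \sum_(i < m.+1) (-1) ^+ i * phi (prism m (face i T)) -
    s * prism_sum m.+1 phi (face m.+1 T).
  rewrite /face_sum big_ord_recr /= exprS -/s mulN1r mulNr; congr (_ + _).
  rewrite big_distrr -big_split /=; apply: eq_bigr => i _.
  by rewrite /prism_sum big_ord_recr /= mulrDr mulrCA.
have sign_sq : s * s = 1 by rewrite -exprD addnn -signr_odd odd_double.
have prism_last : s * face_sum m.+3 phi (prism m.+1 T) =
    s * \sum_(i < m.+1) (-1) ^+ i * phi (prism m (face i T)) -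
    phi (pre_map m.+1 T) + phi (pre_map m.+2 T).
  rewrite /face_sum big_ord_recr big_ord_recr /= face_prism_diag face_prism_subdiag.
  under eq_bigr => i _ do rewrite (@face_prism_le i m T (ltn_ord i)).
  by rewrite !exprS -/s !mulN1r opprK mulNr !mulrDr mulrN !mulrA sign_sq !mul1r.
have prism_sum_rec :
    prism_sum m.+2 (face_sum m.+3 phi) T = prism_sum m.+1 (face_sum m.+2 phi) T +
    s * prism_sum m.+1 phi (face m.+1 T) - s * face_sum m.+3 phi (prism m.+1 T).
  rewrite /prism_sum big_ord_recr /= exprS -/s mulN1r mulNr; congr (_ + _).
  rewrite big_distrr -big_split /=; apply: eq_bigr => j _.
  rewrite /face_sum big_ord_recr /= face_prism_gt // !exprS.
  by rewrite !mulN1r opprK -/s mulrDr mulrCA.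
by rewrite face_sum_rec prism_sum_rec prism_last; lra.
Qed.
End PrismHomotopy.

Section Sequences.
Variable G : Type.

Definition tuple_of (k : nat) (T : nat -> G) : 'I_k -> G := fun i => T i.
Arguments tuple_of k T : clear implicits.

Definition seq_of (k : nat) (t : 'I_k.+1 -> G) : nat -> G := fun l => t (inord l).

Definition agree_below (k : nat) (T1 T2 : nat -> G) :=
  forall l, (l < k)%N -> T1 l = T2 l.

Lemma tuple_of_seq k (t : 'I_k.+1 -> G) : tuple_of k.+1 (seq_of t) = t.
Proof. by apply: functional_extensionality => i; rewrite /tuple_of /seq_of inord_val. Qed.

Lemma tuple_of_agree k T1 T2 : agree_below k T1 T2 -> tuple_of k T1 = tuple_of k T2.
Proof. by move=> eqT; apply: functional_extensionality => i; apply: eqT. Qed.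

Lemma seq_of_lift k (t : 'I_k.+2 -> G) (i : 'I_k.+2) :
  agree_below k.+1 (seq_of (fun j => t (lift i j))) (face i (seq_of t)).
Proof.
move=> l lt_lk; rewrite /seq_of /face; congr t; apply: val_inj => /=.
by rewrite inordK // inordK // /bump; case: (i <= l)%N; lia.
Qed.

Lemma prism_agree (p : G -> G) k j T1 T2 : (j < k)%N ->
  agree_below k T1 T2 -> agree_below k.+1 (prism p j T1) (prism p j T2).
Proof.
move=> lt_jk eqT l lt_lk; rewrite /prism; case: ifP => le_lj.
  by rewrite eqT //; apply: leq_ltn_trans le_lj lt_jk.
by rewrite eqT //; move/negbT: le_lj; lia.
Qed.

End Sequences.
Arguments tuple_of {G} k T _.

Local Notation trivial_act G := (fun (_ : G) (y : unit) => y).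

Definition left_invariant (G : Type) (mul : G -> G -> G) (S : G -> Prop) k
    (c : cochain G unit k) :=
  forall h g, S h -> forall y, c (fun i => mul h (g i)) y = c g y.

Section Retraction.
Variables (G : Type) (mul : G -> G -> G) (inv : G -> G) (S : G -> Prop).
Variable p : G -> G.
Hypothesis p_in : forall g, S (p g).
Hypothesis p_mul : forall h g, S h -> p (mul h g) = mul h (p g).

Variable d : nat.
Variable phi : cochain G unit d.+1.
Hypothesis phi_bdd : bdd_cochain (@whole G) phi.
Hypothesis phi_inv : left_invariant mul S phi.
Hypothesis phi_cocycle :
  cochain_eq (@whole G) (coboundary phi) (@zero_cochain G unit d.+2).

Let Phi (T : nat -> G) : R := phi (tuple_of d.+2 T) tt.

Let prim (b : cochain G unit d) (T : nat -> G) : R :=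
  b (tuple_of d.+1 (fun l => p (T l))) tt + prism_sum p d.+1 Phi T.

Lemma retraction_coboundary :
  Hb_vanishes mul inv S (trivial_act G) d.+1 ->
  exists c : cochain G unit d, [/\ bdd_cochain (@whole G) c,
    left_invariant mul S c &
    cochain_eq (@whole G) (coboundary c) phi].
Proof.
move=> Hb_S.
have [b [[Cb bCb] b_inv b_cob]] :
    exists b : cochain G unit d, [/\ bdd_cochain S b,
      inv_cochain mul inv S (trivial_act G) b &
      cochain_eq S (coboundary b) phi].
  apply: Hb_S.
  - by case: phi_bdd => C phiC; exists C => g _; exact: phiC.
  - by move=> h g Sh _; exact: phi_inv.
  - by move=> g _; exact: phi_cocycle.
have [C PhiC] : exists C : R, forall T, `|Phi T| <= C.
  by case: phi_bdd => C phiC; exists C => T; exact: phiC.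
have prim_agree T1 T2 : agree_below d.+1 T1 T2 -> prim b T1 = prim b T2.
  move=> eqT; rewrite /prim /prism_sum; congr (_ + _).
    by congr b; apply: tuple_of_agree => l lt_ld; rewrite eqT.
  apply: eq_bigr => j _; congr (_ * _); rewrite /Phi.
  by congr phi; apply/tuple_of_agree/prism_agree.
exists (fun u _ => prim b (seq_of u)); split.
- exists (Cb + C *+ d.+1) => u _ _; rewrite (le_trans (ler_normD _ _)) //.
  by apply: lerD; [apply: bCb => i; exact: p_in | apply: prism_sum_bound].
- move=> h u Sh _; rewrite /prim /seq_of; congr (_ + _).
    rewrite -[RHS](b_inv h _ Sh (fun i => p_in _)); congr b.
    by apply: functional_extensionality => i; rewrite /tuple_of p_mul.
  rewrite /prism_sum; apply: eq_bigr => j _; congr (_ * _); rewrite /Phi.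
  rewrite -[RHS](phi_inv _ Sh); congr phi.
  apply: functional_extensionality => i.
  by rewrite /tuple_of /prism; case: ifP; rewrite ?p_mul.
- move=> t _ []; set T := seq_of t.
  have -> : coboundary (fun u _ => prim b (seq_of u)) t tt = face_sum d.+2 (prim b) T.
    by apply: eq_bigr => i _; rewrite (prim_agree _ _ (seq_of_lift t i)).
  have b_part : face_sum d.+2 (fun T => b (tuple_of d.+1 (fun l => p (T l))) tt) T =
      Phi (fun l => p (T l)).
    exact: (b_cob (tuple_of d.+2 (fun l => p (T l))) (fun i => p_in _) tt).
  have pre_map_last : Phi (pre_map p d.+2 T) = Phi (fun l => p (T l)).
    by congr phi; apply: tuple_of_agree => l lt_ld; rewrite /pre_map lt_ld.
  have prism_sum_cocycle : prism_sum p d.+2 (face_sum d.+3 Phi) T = 0.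
    rewrite /prism_sum big1 // => j _.
    by rewrite [face_sum _ _ _](phi_cocycle (g := tuple_of _ _)) // mulr0.
  have := prism_homotopy p Phi d.+1 T; rewrite prism_sum_cocycle addr0 pre_map_last.
  rewrite face_sumD b_part => ->.
  by rewrite /Phi /T tuple_of_seq addrC subrK.
Qed.

End Retraction.

Lemma bdd_cochain_family (G Y : Type) (S : G -> Prop) k m
    (c : 'I_m -> cochain G Y k) :
  (forall i, bdd_cochain S (c i)) ->
  exists C : R, forall i g, in_S S g -> forall y, `|c i g y| <= C.
Proof.
move=> c_bdd; have [C cC] := choice _ c_bdd.
exists (\sum_(i < m) `|C i|) => i g Sg y; rewrite (le_trans (cC i g Sg y)) //.
rewrite (le_trans (ler_norm _)) // (bigD1 i) //= lerDl.
by apply: sumr_ge0 => j _; exact: normr_ge0.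
Qed.

Section GroupAction.
Variables (G : Type) (mul : G -> G -> G) (one : G) (inv : G -> G).
Hypothesis mulA : forall a b c, mul a (mul b c) = mul (mul a b) c.
Hypothesis mul1g : forall a, mul one a = a.
Hypothesis mulVg : forall a, mul (inv a) a = one.

Lemma mulKg a b : mul (inv a) (mul a b) = b.
Proof. by rewrite mulA mulVg mul1g. Qed.

Lemma mulgV a : mul a (inv a) = one.
Proof. by rewrite -[LHS](mulKg (inv a)) (mulKg a) mulVg. Qed.

Lemma mulKVg a b : mul a (mul (inv a) b) = b.
Proof. by rewrite mulA mulgV mul1g. Qed.

(* The element chosen for g depends only on the coset g^-1 S, whence
   p (h g) = h p g for h in S. *)
Lemma subgroup_retraction (S : G -> Prop) :
  S one -> (forall a b, S a -> S b -> S (mul a b)) -> (forall a, S a -> S (inv a)) ->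
  exists p : G -> G,
    (forall g, S (p g)) /\ (forall h g, S h -> p (mul h g) = mul h (p g)).
Proof.
move=> S1 SM SV; pose coset g k := S (mul g k).
have coset_mul h g : S h -> coset (mul h g) = coset g.
  move=> Sh; apply: functional_extensionality => k; apply: propositional_extensionality.
  rewrite /coset -mulA; split; last exact: SM.
  by move=> /(SM _ _ (SV _ Sh)); rewrite mulKg.
exists (fun g => mul g (epsilon (inhabits one) (coset g))); split=> [g | h g Sh].
  by apply: (epsilon_spec _ (coset g)); exists (inv g); rewrite /coset mulgV.
by rewrite coset_mul // mulA.
Qed.

Variables (X : Type) (act : G -> X -> X).
Hypothesis act1 : forall x, act one x = x.
Hypothesis actM : forall g h x, act (mul g h) x = act g (act h x).

Lemma actK a x : act (inv a) (act a x) = x.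
Proof. by rewrite -actM mulVg act1. Qed.

Lemma stabilizerV z h : stabilizer act z h -> stabilizer act z (inv h).
Proof. by rewrite /stabilizer => hz; rewrite -{1}hz actK. Qed.

Lemma stabilizer_retraction z : exists p : G -> G,
  (forall g, stabilizer act z (p g)) /\
  (forall h g, stabilizer act z h -> p (mul h g) = mul h (p g)).
Proof.
apply: subgroup_retraction; rewrite /stabilizer.
- exact: act1.
- by move=> a b az bz; rewrite actM bz az.
- exact: stabilizerV.
Qed.

(* Choosing the index from the orbit predicate of y rather than from y itself
   makes the choice constant on orbits. *)
Lemma orbit_index m (r : 'I_m -> X) : (forall x, exists i g, act g (r i) = x) ->
  exists o : X -> 'I_m,
    (forall h y, o (act h y) = o y) /\ (forall y, exists g, act g (r (o y)) = y).
Proof.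
move=> cover; pose in_orbit y i := exists g, act g (r i) = y.
have in_orbit_act h y : in_orbit (act h y) = in_orbit y.
  apply: functional_extensionality => i; apply: propositional_extensionality.
  split=> -[g e]; last by exists (mul h g); rewrite actM e.
  by exists (mul (inv h) g); rewrite actM e actK.
have inh (y : X) : inhabited 'I_m by case: (cover y) => i _; exact: inhabits i.
exists (fun y => epsilon (inh y) (in_orbit y)); split=> [h y | y].
  by rewrite in_orbit_act; exact: epsilon_inh_irrelevance (cover y).
exact: epsilon_spec (cover y).
Qed.

Lemma orbitwise_coboundary d (F : cochain G X d.+1) m (r : 'I_m -> X)
    (c : 'I_m -> cochain G unit d) :
  (forall x, exists i g, act g (r i) = x) ->
  inv_cochain mul inv (@whole G) act F ->
  (forall i, bdd_cochain (@whole G) (c i)) ->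
  (forall i, left_invariant mul (stabilizer act (r i)) (c i)) ->
  (forall i, cochain_eq (@whole G) (coboundary (c i)) (fun t _ => F t (r i))) ->
  exists B : cochain G X d, [/\ bdd_cochain (@whole G) B,
    inv_cochain mul inv (@whole G) act B &
    cochain_eq (@whole G) (coboundary B) F].
Proof.
move=> cover F_inv c_bdd c_inv c_cob.
have [o [o_act o_orbit]] := orbit_index cover.
have [a a_spec] := choice _ o_orbit.
have [C cC] := bdd_cochain_family c_bdd.
exists (fun t y => c (o y) (fun j => mul (inv (a y)) (t j)) tt); split.
- by exists C => t _ y; apply: cC.
- move=> h t _ _ y /=; set y' := act (inv h) y.
  have o_y' : o y' = o y by exact: o_act.
  set s := mul (inv (a y')) (mul (inv h) (a y)).
  have s_fix : stabilizer act (r (o y)) s.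
    rewrite /stabilizer /s !actM a_spec -/y' -o_y'.
    by rewrite -[in RHS](actK (a y') (r (o y'))) a_spec.
  rewrite o_y' -(c_inv _ _ _ s_fix); congr (c _ _ _).
  by apply: functional_extensionality => j; rewrite /s -!mulA mulKVg mulKg.
- move=> t _ y.
  transitivity (coboundary (c (o y)) (fun j => mul (inv (a y)) (t j)) tt); first by [].
  rewrite c_cob // -[in RHS](a_spec y) -[in LHS](actK (a y) (r (o y))).
  rewrite -F_inv //; congr F.
  by apply: functional_extensionality => j; rewrite mulKVg.
Qed.

Lemma evaluation_coboundary d (F : cochain G X d.+1) z :
  bdd_cochain (@whole G) F -> inv_cochain mul inv (@whole G) act F ->
  cochain_eq (@whole G) (coboundary F) (@zero_cochain G X d.+2) ->
  Hb_vanishes mul inv (stabilizer act z) (trivial_act G) d.+1 ->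
  exists c : cochain G unit d, [/\ bdd_cochain (@whole G) c,
    left_invariant mul (stabilizer act z) c &
    cochain_eq (@whole G) (coboundary c) (fun t _ => F t z)].
Proof.
move=> [C FC] F_inv F_cocycle.
have [p [p_in p_mul]] := stabilizer_retraction z.
apply: (retraction_coboundary p_in p_mul).
- by exists C => g _ _; exact: FC.
- by move=> h g hz _; rewrite F_inv // stabilizerV.
- by move=> g _ y; exact: F_cocycle.
Qed.

End GroupAction.

Theorem lemma6p10 (G : Type) (mul : G -> G -> G) (one : G) (inv : G -> G)
  (mulA : forall a b c, mul a (mul b c) = mul (mul a b) c)
  (mul1g : forall a, mul one a = a)
  (mulVg : forall a, mul (inv a) a = one)
  (X : Type) (act : G -> X -> X)
  (act1 : forall x, act one x = x)
  (actM : forall g h x, act (mul g h) x = act g (act h x))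
  (finite_orbits : exists (m : nat) (r : 'I_m -> X),
      forall x, exists (i : 'I_m) (g : G), act g (r i) = x)
  (n : nat)
  (stab_acyclic : forall x : X, exists g : G,
      n_boundedly_acyclic mul inv (stabilizer act (act g x)) n) :
  forall k : nat, (leq 1 k && leq k n) -> Hb_vanishes mul inv (@whole G) act k.
Proof.
case=> [//|d] /= d_lt_n F F_bdd F_inv F_cocycle.
have [m [r cover]] := finite_orbits.
have [g acyclic] := choice _ stab_acyclic.
pose z i := act (g (r i)) (r i).
have z_cover x : exists i h, act h (z i) = x.
  have [i [h <-]] := cover x.
  by exists i, (mul h (inv (g (r i)))); rewrite actM (actK mulVg act1 actM).
have [c c_spec] := choice _ (fun i => evaluation_coboundary mulA mul1g mulVg act1 actM
  F_bdd F_inv F_cocycle (acyclic (r i) d.+1 d_lt_n)).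
apply: (orbitwise_coboundary mulA mul1g mulVg act1 actM z_cover F_inv (c := c)) => i;
  by case: (c_spec i).
Qed.
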